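(* Let $A$ be a ring satisfying the irreducible intersection property, and let $\varphi: A\hookrightarrow B$ be an injective ring map (identify $A$ with its image) such that: (i) for every prime ideal $p\subset A$ there exists a prime ideal $q\subset B$ with $q\cap A=p$; (ii) for every prime ideal $q\subset B$, $(q\cap A)B=q$. Then $B$ satisfies the irreducible intersection property.
   Context: All rings are commutative with $1$. A ring $R$ satisfies the irreducible intersection property if for any prime ideals $p_1,p_2\subset R$, either $p_1+p_2=R$ or $p_1+p_2$ is a prime ideal. For a ring map $A\to B$ and an ideal $J$ of $B$, $J\cap A$ denotes the preimage of $J$ in $A$, and for an ideal $I$ of $A$, $IB$ is the ideal of $B$ generated by the image of $I$. *)

From HB Require Import structures.
From mathcomp Require Import all_boot all_order all_algebra.
Set Implicit Arguments. Unset Strict Implicit. Unset Printing Implicit Defensive.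
Import GRing.Theory.
Local Open Scope ring_scope.

Definition is_ideal (R : comPzRingType) (I : R -> Prop) : Prop :=
  [/\ I 0,
      (forall x y, I x -> I y -> I (x + y)) &
      (forall r x, I x -> I (r * x))].

Definition is_prime_ideal (R : comPzRingType) (P : R -> Prop) : Prop :=
  [/\ is_ideal P, ~ P 1 &
      (forall a b, P (a * b) -> P a \/ P b)].

Definition ideal_sum (R : comPzRingType) (I J : R -> Prop) : R -> Prop :=
  fun x => exists a b, [/\ I a, J b & x = a + b].

Definition is_whole (R : comPzRingType) (I : R -> Prop) : Prop :=
  forall x, I x.

Definition irreducible_intersection_property (R : comPzRingType) : Prop :=
  forall p1 p2 : R -> Prop, is_prime_ideal p1 -> is_prime_ideal p2 ->
    is_whole (ideal_sum p1 p2) \/ is_prime_ideal (ideal_sum p1 p2).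

Definition contraction (A B : comPzRingType) (phi : A -> B) (J : B -> Prop)
  : A -> Prop := fun a => J (phi a).

Definition extension (A B : comPzRingType) (phi : A -> B) (I : A -> Prop)
  : B -> Prop :=
  fun x => exists (n : nat) (a : 'I_n -> A) (b : 'I_n -> B),
    (forall i, I (a i)) /\ x = \sum_(i < n) b i * phi (a i).

Definition same_ideal (R : comPzRingType) (I J : R -> Prop) : Prop :=
  forall x, I x <-> J x.

From HB Require Import structures.
From mathcomp Require Import all_boot all_order all_algebra.
Set Implicit Arguments. Unset Strict Implicit. Unset Printing Implicit Defensive.
Import GRing.Theory.
Local Open Scope ring_scope.

(* Let q1, q2 be primes of B and p_i := q_i ∩ A their contractions, which are
   primes of A.  Since ideal sums are compatible with contraction,
   p1 + p2 ⊆ (q1 + q2) ∩ A.  By the irreducible intersection property of A,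
   either p1 + p2 = A, and then 1 ∈ q1 + q2 so q1 + q2 = B; or p1 + p2 is
   prime, and by (i) some prime q of B lies over it.  Then (ii) gives
   q = (p1 + p2)B ⊆ q1 + q2 and q_i = p_i B ⊆ q, hence q1 + q2 = q is prime. *)

Section Ideals.
Variable R : comPzRingType.
Implicit Types I J K : R -> Prop.

Lemma ideal_sum_big I n (F : 'I_n -> R) :
  is_ideal I -> (forall i, I (F i)) -> I (\sum_(i < n) F i).
Proof. by case=> I0 ID _ IF; apply: big_ind. Qed.

Lemma ideal_whole_of_one I : is_ideal I -> I 1 -> is_whole I.
Proof. by case=> _ _ IM I1 x; rewrite -[x]mulr1; apply: IM. Qed.

Lemma ideal_sum_is_ideal I J : is_ideal I -> is_ideal J -> is_ideal (ideal_sum I J).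
Proof.
case=> I0 ID IM [J0 JD JM]; split.
- by exists 0, 0; rewrite addr0.
- move=> _ _ [a [b [Ia Jb ->]]] [c [d [Ic Jd ->]]].
  by exists (a + c), (b + d); rewrite addrACA; split; [apply: ID | apply: JD |].
- move=> r _ [a [b [Ia Jb ->]]].
  by exists (r * a), (r * b); rewrite mulrDr; split; [apply: IM | apply: JM |].
Qed.

Lemma ideal_sum_l I J x : is_ideal J -> I x -> ideal_sum I J x.
Proof. by case=> J0 _ _ Ix; exists x, 0; rewrite addr0. Qed.

Lemma ideal_sum_r I J x : is_ideal I -> J x -> ideal_sum I J x.
Proof. by case=> I0 _ _ Jx; exists 0, x; rewrite add0r. Qed.

Lemma ideal_sum_sub I J K :
  is_ideal K -> (forall x, I x -> K x) -> (forall x, J x -> K x) ->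
  forall x, ideal_sum I J x -> K x.
Proof. by case=> _ KD _ IK JK _ [a [b [Ia Jb ->]]]; apply: KD; auto. Qed.

Lemma prime_ideal_same I J : same_ideal I J -> is_prime_ideal I -> is_prime_ideal J.
Proof.
move=> E [[I0 ID IM] I1 IP]; split; first split.
- exact/E.
- by move=> x y /E Ix /E Iy; apply/E; apply: ID.
- by move=> r x /E Ix; apply/E; apply: IM.
- by move/E.
- by move=> a b /E /IP [] /E; [left | right].
Qed.

End Ideals.

Section ContractionExtension.
Variables (A B : comPzRingType) (phi : {rmorphism A -> B}).

Lemma contraction_prime q : is_prime_ideal q -> is_prime_ideal (contraction phi q).
Proof.
rewrite /contraction => -[[q0 qD qM] q1 qP]; split; first split.
- by rewrite rmorph0.
- by move=> x y qx qy; rewrite rmorphD; apply: qD.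
- by move=> r x qx; rewrite rmorphM; apply: qM.
- by rewrite rmorph1.
- by move=> a b; rewrite rmorphM; apply: qP.
Qed.

Lemma contraction_sum_sub J1 J2 a :
  ideal_sum (contraction phi J1) (contraction phi J2) a ->
  contraction phi (ideal_sum J1 J2) a.
Proof.
by case=> [u [v [J1u J2v ->]]]; exists (phi u), (phi v); rewrite rmorphD.
Qed.

Lemma extension_sub I J :
  is_ideal J -> (forall a, I a -> J (phi a)) ->
  forall x, extension phi I x -> J x.
Proof.
move=> idJ IJ _ [n [a [b [Ia ->]]]]; apply: ideal_sum_big => // i.
by case: idJ => _ _ JM; apply/JM/IJ.
Qed.

End ContractionExtension.

Theorem mainTheorem10 (A B : comPzRingType) (phi : {rmorphism A -> B}) :
  irreducible_intersection_property A ->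
  injective phi ->
  (forall p : A -> Prop, is_prime_ideal p ->
     exists q : B -> Prop, is_prime_ideal q /\ same_ideal (contraction phi q) p) ->
  (forall q : B -> Prop, is_prime_ideal q ->
     same_ideal (extension phi (contraction phi q)) q) ->
  irreducible_intersection_property B.
Proof.
move=> iipA _ lying_over extension_contraction q1 q2 q1P q2P.
have [[idq1 _ _] [idq2 _ _]] := (q1P, q2P).
have idq12 := ideal_sum_is_ideal idq1 idq2.
have [p1P p2P] := (contraction_prime phi q1P, contraction_prime phi q2P).
have [p12_whole | p12P] := iipA _ _ p1P p2P.
  by left; apply: ideal_whole_of_one => //; rewrite -(rmorph1 phi);
     apply/contraction_sum_sub/p12_whole.
right; have [q [qP q_over]] := lying_over _ p12P.
have [idq _ _] := qP.
apply: (prime_ideal_same _ qP) => x; split.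
- (* q = (p1 + p2)B ⊆ q1 + q2 *)
  move=> /(extension_contraction _ qP); apply: extension_sub => // a /q_over.
  exact: contraction_sum_sub.
- (* q_i = p_i B ⊆ q, since p_i ⊆ p1 + p2 = q ∩ A *)
  apply: ideal_sum_sub => // y /(extension_contraction _ _);
    [move/(_ q1P) | move/(_ q2P)]; apply: extension_sub => // a qa; apply/q_over.
  + by apply: ideal_sum_l => //; case: p2P.
  + by apply: ideal_sum_r => //; case: p1P.
Qed.
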